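(* Let $R$ be a commutative Noetherian ring of prime characteristic $p$ and $G$ an $x$-torsion-free left $R[x,f]$-module. Let $N:=\operatorname{ann}_G(\mathfrak{b}R[x,f])$ be a non-zero special annihilator submodule of $G$, where $\mathfrak{b}\in\mathcal{I}(G)$ satisfies $\operatorname{grann}_{R[x,f]}N=\mathfrak{b}R[x,f]$, and let $\mathfrak{b}=\mathfrak{p}_1\cap\dots\cap\mathfrak{p}_t$ be the minimal primary decomposition of the radical ideal $\mathfrak{b}$. Suppose $t>1$ and $\{1,\dots,t\}=U\cup V$ with $U,V$ non-empty and disjoint; set $\mathfrak{a}=\bigcap_{i\in U}\mathfrak{p}_i$, $\mathfrak{c}=\bigcap_{i\in V}\mathfrak{p}_i$ and $L:=\operatorname{ann}_G(\mathfrak{a}R[x,f])$. Then (i) $0\subsetneq L\subsetneq N$; (ii) $N/L=\operatorname{ann}_{G/L}(\mathfrak{c}R[x,f])$, and $\operatorname{grann}_{R[x,f]}(N/L)=\mathfrak{c}R[x,f]$ (so $\mathfrak{c}\in\mathcal{I}(G/L)$ corresponds to $N/L$); (iii) $\operatorname{grann}_{R[x,f]}L=\mathfrak{a}R[x,f]$, so $\mathfrak{a}\in\mathcal{I}(G)$ corresponds to $L$.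
   Context: $R[x,f]$ is the Frobenius skew polynomial ring: free left $R$-module on $(x^i)_{i\ge0}$, $xr=r^px$. For an ideal $\mathfrak{a}$ of $R$, $\mathfrak{a}R[x,f]=\bigoplus_{n\ge0}\mathfrak{a}x^n$. $x$-torsion-free: $xg=0\Rightarrow g=0$. $\operatorname{ann}_M\mathfrak{B}$ is the set of elements of $M$ killed by $\mathfrak{B}$; special annihilator submodules are $\operatorname{ann}_M\mathfrak{B}$ for graded two-sided ideals $\mathfrak{B}$. $\operatorname{grann}N$ is the set of $\sum r_ix^i$ with each $r_ix^i$ annihilating $N$. For $x$-torsion-free $G$, $\mathcal{I}(G)$ is the set of ideals $\mathfrak{b}$ with $\operatorname{grann}N=\mathfrak{b}R[x,f]$ for some $R[x,f]$-submodule $N$ of $G$ (these ideals are radical). For a special annihilator submodule $L$ of $G$, $G/L$ is $x$-torsion-free. *)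

From HB Require Import structures.
From mathcomp Require Import all_boot all_order all_algebra.
Set Implicit Arguments. Unset Strict Implicit. Unset Printing Implicit Defensive.
Import GRing.Theory.
Local Open Scope ring_scope.

Section Defs.
Variable R : comNzRingType.

Definition is_ideal (I : R -> Prop) : Prop :=
  I 0 /\ (forall a b, I a -> I b -> I (a + b)) /\ (forall r a, I a -> I (r * a)).

Definition is_prime_ideal (P : R -> Prop) : Prop :=
  is_ideal P /\ ~ P 1 /\ (forall a b, P (a * b) -> P a \/ P b).

Definition noetherian_ring : Prop :=
  forall I : nat -> R -> Prop, (forall n, is_ideal (I n)) ->
    (forall n r, I n r -> I n.+1 r) ->
    exists m, forall n r, (m <= n)%N -> I n r -> I m r.

(* A left R[x,f]-module (f = Frobenius r |-> r^p) is an R-module G together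
   with the action xF : G -> G of x, which is additive and satisfies
   x (r g) = r^p (x g), i.e. x r = r^p x. *)
Definition frob_skew_action (p : nat) (G : lmodType R) (xF : G -> G) : Prop :=
  (forall g h, xF (g + h) = xF g + xF h) /\
  (forall (r : R) g, xF (r *: g) = r ^+ p *: xF g).

Definition x_torsion_free (G : lmodType R) (xF : G -> G) : Prop :=
  forall g, xF g = 0 -> g = 0.

Definition is_submodule (G : lmodType R) (xF : G -> G) (N : G -> Prop) : Prop :=
  N 0 /\ (forall g h, N g -> N h -> N (g + h)) /\
  (forall (r : R) g, N g -> N (r *: g)) /\ (forall g, N g -> N (xF g)).

(* ann_G (b R[x,f]) : elements killed by every r x^n with r in b
   (b R[x,f] = (+)_n b x^n). *)
Definition ann_bRxf (G : lmodType R) (xF : G -> G) (b : R -> Prop) : G -> Prop :=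
  fun g => forall (n : nat) (r : R), b r -> r *: iter n xF g = 0.

(* degree-n component of grann N:  { r | r x^n annihilates N } *)
Definition grann_comp (G : lmodType R) (xF : G -> G) (N : G -> Prop) (n : nat)
  : R -> Prop := fun r => forall g, N g -> r *: iter n xF g = 0.

(* grann_{R[x,f]} N = b R[x,f]  (equality of graded left ideals, i.e. of
   every homogeneous component) *)
Definition grann_eq (G : lmodType R) (xF : G -> G) (N : G -> Prop) (b : R -> Prop)
  : Prop := forall (n : nat) (r : R), grann_comp xF N n r <-> b r.

Definition Rxf_morphism (G Q : lmodType R) (xG : G -> G) (xQ : Q -> Q)
  (pi : G -> Q) : Prop :=
  (forall g h, pi (g + h) = pi g + pi h) /\
  (forall (r : R) g, pi (r *: g) = r *: pi g) /\
  (forall g, pi (xG g) = xQ (pi g)).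

Definition is_quotient_by (p : nat) (G Q : lmodType R) (xG : G -> G) (xQ : Q -> Q)
  (pi : G -> Q) (L : G -> Prop) : Prop :=
  frob_skew_action p xQ /\ Rxf_morphism xG xQ pi /\
  (forall q, exists g, pi g = q) /\ (forall g, pi g = 0 <-> L g).

End Defs.

From HB Require Import structures.
From mathcomp Require Import all_boot all_order all_algebra.
From Stdlib Require Import Classical.
Import GRing.Theory.
Local Open Scope ring_scope.

(* Since b = a ∩ c, we have c N ⊆ L: for g in N, r in c and s in a,
   s x^n (r g) = s r^(p^n) x^n g with s r^(p^n) in a ∩ c = b.  Irredundancy
   yields, for each P_i with i in U, an element of c outside P_i; it shows
   L <> 0 and cancels against P_i when computing grann L, and symmetrically
   for i in V.  Conversely, if the class of g lies in ann_(G/L)(c R[x,f]),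
   then for r in b we get x (r x^n g) = r^(p-1) r x^(n+1) g = 0 because
   r^(p-1) is in a and r in c, so x-torsion-freeness puts g in N. *)

Section Ideals.
Context {R : comNzRingType}.

Lemma ideal_mull {I : R -> Prop} x {y} : is_ideal I -> I y -> I (x * y).
Proof. by move=> [_ [_ mulI]]; apply: mulI. Qed.

Lemma ideal_mulr {I : R -> Prop} {x} y : is_ideal I -> I x -> I (x * y).
Proof. by rewrite mulrC; apply: ideal_mull. Qed.

Lemma ideal_expr {I : R -> Prop} {x k} :
  is_ideal I -> I x -> (0 < k)%N -> I (x ^+ k).
Proof. by case: k => // k idI Ix _; rewrite exprSr; apply: ideal_mull. Qed.

Lemma is_ideal_bigcap {T : finType} {P : T -> R -> Prop} (W : {set T}) :
  (forall i, is_ideal (P i)) -> is_ideal (fun r => forall i, i \in W -> P i r).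
Proof.
move=> idP; split; [|split].
- by move=> i _; case: (idP i).
- move=> x y Px Py i iW; case: (idP i) => _ [addP _].
  by apply: addP; [apply: Px | apply: Py].
- by move=> r x Px i iW; apply: ideal_mull; last apply: Px.
Qed.

Lemma prime_expr_notin {P : R -> Prop} {s} k :
  is_prime_ideal P -> ~ P s -> ~ P (s ^+ k).
Proof.
move=> [_ [P1 primeP]] Ps; elim: k => [|k IH]; first by rewrite expr0.
by rewrite exprS => /primeP [].
Qed.

Lemma prime_mul_cancel {P : R -> Prop} {r s} :
  is_prime_ideal P -> ~ P s -> P (r * s) -> P r.
Proof. by move=> [_ [_ primeP]] Ps /primeP []. Qed.

Lemma irredundant_sep {T : finType} {P : T -> R -> Prop} {W : {set T}} {i} :
  ~ (forall r, (forall j, j != i -> P j r) -> P i r) -> i \notin W ->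
  exists s, (forall j, j \in W -> P j s) /\ ~ P i s.
Proof.
move=> irr iW; apply: NNPP => nosep; apply: irr => r Pr.
apply: NNPP => Pir; apply: nosep; exists r; split => // j jW.
by apply: Pr; apply: contraNneq iW => <-.
Qed.

End Ideals.

Section FrobeniusModule.
Context {R : comNzRingType} {p : nat} {G : lmodType R} {xF : G -> G}.
Hypothesis hG : frob_skew_action p xF.

Lemma iter_frobZ n r g : iter n xF (r *: g) = r ^+ (p ^ n) *: iter n xF g.
Proof.
elim: n => [|n IH] /=; first by rewrite expn0 expr1.
by rewrite IH hG.2 -exprM -expnSr.
Qed.

Lemma ann_bRxf_iter {b} n {g} : ann_bRxf xF b g -> ann_bRxf xF b (iter n xF g).
Proof. by move=> annb k r br; rewrite -iterD; apply: annb. Qed.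

Lemma ann_bRxf_anti {a b : R -> Prop} {g} :
  (forall r, b r -> a r) -> ann_bRxf xF a g -> ann_bRxf xF b g.
Proof. by move=> sub_ba anna n r /sub_ba; apply: anna. Qed.

Lemma grann_eq_witness {N b s} :
  grann_eq xF N b -> ~ b s -> exists g, N g /\ s *: g <> 0.
Proof.
move=> grN bs; apply: NNPP => nog; apply/bs/(grN 0%N) => g Ng /=.
by apply: NNPP => sg; apply: nog; exists g.
Qed.

Section SplitAnnihilator.
Context {a b c : R -> Prop}.
Hypotheses (a_ideal : is_ideal a) (c_ideal : is_ideal c).
Hypotheses (sub_ba : forall r, b r -> a r) (sub_bc : forall r, b r -> c r).
Hypothesis sub_acb : forall r, a r -> c r -> b r.
Hypothesis p_gt1 : (1 < p)%N.

Let N := ann_bRxf xF b.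
Let L := ann_bRxf xF a.

Lemma ann_scale_ideal {g r} n : N g -> c r -> L (r *: iter n xF g).
Proof.
move=> Ng cr m s sa; rewrite iter_frobZ scalerA.
apply: (ann_bRxf_iter n Ng m); apply: sub_acb; first exact: ideal_mulr.
by apply: (ideal_mull s c_ideal); apply: ideal_expr; rewrite // expn_gt0 ltnW.
Qed.

Lemma ann_of_products {g} : x_torsion_free xF ->
  (forall k s r, a s -> c r -> s *: (r *: iter k xF g) = 0) -> N g.
Proof.
move=> htf prod0 n r br; apply: htf; rewrite hG.2 -iterS.
have -> : r ^+ p = r ^+ p.-1 * r by rewrite -exprSr prednK // ltnW.
rewrite -scalerA; apply: prod0; last exact: sub_bc.
by apply: (ideal_expr a_ideal (sub_ba _ br)); rewrite -subn1 subn_gt0.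
Qed.

Hypothesis grN : grann_eq xF N b.

Lemma ann_neq0 {s} : c s -> ~ b s -> exists g, L g /\ g <> 0.
Proof.
move=> cs bs; have [g [Ng sg]] := grann_eq_witness grN bs.
by exists (s *: g); split; first exact: (ann_scale_ideal 0 Ng cs).
Qed.

Lemma ann_not_sub {s} : a s -> ~ b s -> exists g, N g /\ ~ L g.
Proof.
move=> sa bs; apply: NNPP => NsubL; apply/bs/(grN 0%N) => g Ng.
have Lg : L g by apply: NNPP => Lg; apply: NsubL; exists g.
exact: Lg 0%N s sa.
Qed.

Lemma grann_ann_sub {n r s} : grann_comp xF L n r -> c s -> b (r * s ^+ (p ^ n)).
Proof.
move=> grL cs; apply/(grN n) => g Ng; rewrite -scalerA -iter_frobZ.
exact/grL/(ann_scale_ideal 0 Ng cs).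
Qed.

Section Quotient.
Context {Q : lmodType R} {xQ : Q -> Q} {quo : G -> Q}.
Hypothesis hquo : is_quotient_by p xF xQ quo L.

Lemma quotient_iter n g : quo (iter n xF g) = iter n xQ (quo g).
Proof.
have [_ [[_ [_ pix]] _]] := hquo.
by elim: n => [|n IH] //=; rewrite pix IH.
Qed.

Lemma quotient_scale_ker {g} n {r} :
  ann_bRxf xQ c (quo g) -> c r -> L (r *: iter n xF g).
Proof.
have [_ [[_ [piZ _]] [_ ker]]] := hquo.
by move=> annc cr; apply/ker; rewrite piZ quotient_iter; apply: annc.
Qed.

Lemma quotient_image_ann : x_torsion_free xF ->
  forall q, (exists g, N g /\ quo g = q) <-> ann_bRxf xQ c q.
Proof.
have [_ [[_ [piZ _]] [surj ker]]] := hquo.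
move=> htf q; split=> [[g [Ng <-]] n r cr | annc].
  by rewrite -quotient_iter -piZ; apply/ker/ann_scale_ideal.
have [g gq] := surj q; exists g; split=> //.
apply: ann_of_products => // k s r sa cr.
have anncg : ann_bRxf xQ c (quo g) by rewrite gq.
exact: (quotient_scale_ker k anncg cr 0%N s sa).
Qed.

Lemma quotient_grann_sub {n r s} :
  grann_comp xQ (fun q => exists g, N g /\ quo g = q) n r -> a s -> b (s * r).
Proof.
have [_ [[_ [piZ _]] [_ ker]]] := hquo.
move=> grNq sa; apply/(grN n) => g Ng; rewrite -scalerA.
have Lg : L (r *: iter n xF g).
  by apply/ker; rewrite piZ quotient_iter; apply: grNq; exists g.
exact: Lg 0%N s sa.
Qed.

End Quotient.
End SplitAnnihilator.
End FrobeniusModule.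

Theorem theorem3p6
  (R : comNzRingType) (p : nat)
  (hnoeth : noetherian_ring R) (hchar : p \in [pchar R])
  (G : lmodType R) (xF : G -> G)
  (hG : frob_skew_action p xF) (htf : x_torsion_free xF)
  (b : R -> Prop) (hb : is_ideal b)
  (hgrN : grann_eq xF (ann_bRxf xF b) b)
  (hN0 : exists g, ann_bRxf xF b g /\ g <> 0)
  (t : nat) (P : 'I_t -> R -> Prop)
  (hP : forall i, is_prime_ideal (P i))
  (hbP : forall r, b r <-> (forall i, P i r))
  (hirr : forall i, ~ (forall r, (forall j, j != i -> P j r) -> P i r))
  (ht : (1 < t)%N)
  (U V : {set 'I_t})
  (hUV : U :|: V = [set: 'I_t]) (hUVd : U :&: V = set0)
  (hU : U != set0) (hV : V != set0) :
  let N := ann_bRxf xF b in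
  let a := fun r : R => forall i, i \in U -> P i r in
  let c := fun r : R => forall i, i \in V -> P i r in
  let L := ann_bRxf xF a in
  (* (i) 0 < L < N *)
  ((exists g, L g /\ g <> 0) /\ (forall g, L g -> N g) /\ (exists g, N g /\ ~ L g)) /\
  (* (ii) in G/L: N/L = ann_{G/L}(c R[x,f]) and grann (N/L) = c R[x,f] *)
  (forall (Q : lmodType R) (xQ : Q -> Q) (pi : G -> Q),
     is_quotient_by p xF xQ pi L ->
     (forall q, (exists g, N g /\ pi g = q) <-> ann_bRxf xQ c q) /\
     grann_eq xQ (fun q => exists g, N g /\ pi g = q) c) /\
  (* (iii) grann L = a R[x,f] *)
  grann_eq xF L a.
Proof.
move=> N a c L; rewrite {}/N {}/L.
have p_gt1 : (1 < p)%N := prime_gt1 (pcharf_prime hchar).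
have a_ideal : is_ideal a := is_ideal_bigcap U (fun i => (hP i).1).
have c_ideal : is_ideal c := is_ideal_bigcap V (fun i => (hP i).1).
have UorV i : (i \in U) || (i \in V) by move/setP/(_ i): hUV; rewrite !inE.
have UnotV i : i \in U -> i \notin V.
  by move=> iU; apply/negP => iV; move/setP/(_ i): hUVd; rewrite !inE iU iV.
have VnotU i : i \in V -> i \notin U by apply: contraTN; apply: UnotV.
have sub_ba r : b r -> a r by move/hbP => br i _.
have sub_bc r : b r -> c r by move/hbP => br i _.
have sub_acb r : a r -> c r -> b r.
  by move=> ar cr; apply/hbP => i; case/orP: (UorV i); [apply: ar | apply: cr].
have notb i s : ~ P i s -> ~ b s by move=> Pis /hbP /(_ i).
split; [split; [|split] | split].
- have [i iU] := set0Pn _ hU.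
  have [s [cs Pis]] := irredundant_sep (hirr i) (UnotV i iU).
  exact: (ann_neq0 hG a_ideal c_ideal sub_acb p_gt1 hgrN cs (notb i s Pis)).
- by move=> g; apply: ann_bRxf_anti.
- have [i iV] := set0Pn _ hV.
  have [s [sa Pis]] := irredundant_sep (hirr i) (VnotU i iV).
  exact: (ann_not_sub hgrN sa (notb i s Pis)).
- move=> Q xQ quo hquo.
  have imN := quotient_image_ann hG a_ideal c_ideal sub_ba sub_bc sub_acb p_gt1 hquo htf.
  split=> // n r; split=> [grNr i iV | cr q /imN annq]; last exact: annq.
  have [s [sa Pis]] := irredundant_sep (hirr i) (VnotU i iV).
  apply: prime_mul_cancel (hP i) Pis _; rewrite mulrC.
  exact: (hbP _).1 (quotient_grann_sub hgrN hquo grNr sa) i.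
- move=> n r; split=> [grLr i iU | ar g Lg]; last exact: Lg.
  have [s [cs Pis]] := irredundant_sep (hirr i) (UnotV i iU).
  apply: prime_mul_cancel (hP i) (prime_expr_notin (p ^ n) (hP i) Pis) _.
  exact: (hbP _).1 (grann_ann_sub hG a_ideal c_ideal sub_acb p_gt1 hgrN grLr cs) i.
Qed.
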